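(* Let $f_1,\dots,f_k \in \mathbb{K}[\bm{x}]$ be multihomogeneous polynomials, let $\bm{d} \in \mathbb{Z}^r$ and let $<$ be a monomial order. If $[H_1^s]_{\bm{d}} = 0$ for all $s \leq k$, then the Macaulay matrix $\mathcal{M}^k_{\bm{d}}$ (the output of the algorithm $\texttt{M}_3\texttt{H}(\{f_1,\dots,f_k\},\bm{d},<)$ described below) is full-rank.
   Context: $\mathbb{K}$ is a field of characteristic 0. For $n_1,\dots,n_r \in \mathbb{N}$, $\mathbb{K}[\bm{x}] := \bigotimes_{i=1}^r \mathbb{K}[x_{i,0},\dots,x_{i,n_i}]$ is the multihomogeneous $\mathbb{K}$-algebra multigraded by $\mathbb{Z}^r$, with $\mathbb{K}[\bm{x}]_{\bm{d}} := \bigotimes_{i=1}^r \mathbb{K}[x_{i,0},\dots,x_{i,n_i}]_{d_i}$; for a module $\mathrm{M}$, $[\mathrm{M}]_{\bm{d}}$ denotes its graded part of multidegree $\bm{d}$. For $s \le k$, $H_1^s := H_1(\mathcal{K}_\bullet(f_1,\dots,f_s;\mathbb{K}[\bm{x}]))$ is the first homology module of the Koszul complex of $f_1,\dots,f_s$ over $\mathbb{K}[\bm{x}]$. A Macaulay matrix is a matrix whose columns are indexed by monomials and whose rows are indexed by polynomials, the entry at (monomial $m$, polynomial $f$) being the coefficient of $m$ in $f$. The matrix $\mathcal{M}^k_{\bm{d}} = \texttt{M}_3\texttt{H}(\{f_1,\dots,f_k\},\bm{d},<)$ is defined recursively: if $k=1$, start with the Macaulay matrix with columns indexed by the monomials of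 $\mathbb{K}[\bm{x}]_{\bm{d}}$ in decreasing order w.r.t. $<$ and no rows, and set $\mathfrak{L}=\emptyset$; if $k>1$, start with $\mathcal{M}^{k-1}_{\bm{d}} = \texttt{M}_3\texttt{H}(\{f_1,\dots,f_{k-1}\},\bm{d},<)$ and let $\mathfrak{L}$ be the set of leading monomials of the rows of the Gaussian elimination of $\texttt{M}_3\texttt{H}(\{f_1,\dots,f_{k-1}\},\bm{d}-\deg(f_k),<)$. Then, for every monomial $\bm{x}^\beta \in \mathbb{K}[\bm{x}]_{\bm{d}-\deg(f_k)}$ with $\bm{x}^\beta \notin \mathfrak{L}$, add the row $\bm{x}^\beta \cdot f_k$. *)

From HB Require Import structures.
From mathcomp Require Import all_boot all_order all_algebra.
From mathcomp Require Import mpoly.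
From Stdlib Require Import ClassicalEpsilon.
Set Implicit Arguments. Unset Strict Implicit. Unset Printing Implicit Defensive.
Import Order.TTheory GRing.Theory Num.Theory.
Local Open Scope ring_scope.

(* Multihomogeneous setting: r blocks of variables, block i has (n i).+1
   variables x_{i,0..n_i}.  All variables are numbered 0 .. N-1 with
   N = \sum_i (n i).+1 (consecutively, block by block), and
   K[x] = {mpoly K[nvars n]}. *)
Definition nvars (r : nat) (n : 'I_r -> nat) : nat := (\sum_(i < r) (n i).+1)%N.

Definition block (r : nat) (n : 'I_r -> nat) (j : 'I_(nvars n)) : 'I_r :=
  @tagnat.sig1 r (fun i => (n i).+1) j.

Definition mmdeg (r : nat) (n : 'I_r -> nat) (m : 'X_{1..nvars n}) (i : 'I_r) : int :=
  ((\sum_(j < nvars n | block j == i) m j)%N)%:Z.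

Definition mhomog (K : fieldType) (r : nat) (n : 'I_r -> nat)
  (e : 'I_r -> int) (p : {mpoly K[nvars n]}) : Prop :=
  forall m, m \in msupp p -> forall i, mmdeg m i = e i.

Definition monomial_order (N : nat) (lt : rel 'X_{1..N}) : Prop :=
  [/\ irreflexive lt, transitive lt,
      (forall a b, a != b -> lt a b || lt b a),
      (forall a b c, lt a b -> lt (a + c)%MM (b + c)%MM) &
      (forall a, a != 0%MM -> lt 0%MM a)].

Definition mons (r : nat) (n : 'I_r -> nat) (lt : rel 'X_{1..nvars n})
  (e : 'I_r -> int) : seq 'X_{1..nvars n} :=
  let b := (\sum_(i < r) `|e i|)%N.+1 in
  sort (fun a c => lt c a || (a == c))
    [seq bmnm m | m <- enum [pred m : bmultinom (nvars n) b | [forall i, @mmdeg r n (bmnm m) i == e i]]].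

Definition is_lm (N : nat) (K : fieldType) (lt : rel 'X_{1..N})
  (p : {mpoly K[N]}) (m : 'X_{1..N}) : Prop :=
  m \in msupp p /\ forall m', m' \in msupp p -> m' != m -> lt m' m.

Definition in_span (N : nat) (K : fieldType) (rows : seq {mpoly K[N]})
  (p : {mpoly K[N]}) : Prop :=
  exists c : 'I_(size rows) -> K, p = \sum_(i < size rows) c i *: rows`_i.

(* The set of leading monomials of the rows of the Gaussian elimination
   (row echelon form) of the Macaulay matrix with rows `rows` and columns in
   decreasing order = the set of leading monomials of the nonzero
   elements of its row space. *)
Definition LMset (N : nat) (K : fieldType) (lt : rel 'X_{1..N})
  (rows : seq {mpoly K[N]}) (m : 'X_{1..N}) : Prop :=
  exists p, [/\ in_span rows p, p != 0 & is_lm lt p m].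

Definition decide (P : Prop) : bool :=
  if excluded_middle_informative P then true else false.

(* Algorithm M3H, on the reversed list of (polynomial, multidegree) pairs:
   returns the list of rows of the Macaulay matrix, in order. *)
Fixpoint M3H_rev (K : fieldType) (r : nat) (n : 'I_r -> nat)
  (lt : rel 'X_{1..nvars n})
  (rfs : seq ({mpoly K[nvars n]} * ('I_r -> nat))) (d : 'I_r -> int)
  : seq {mpoly K[nvars n]} :=
  match rfs with
  | [::] => [::]
  | (fk, ek) :: rfs' =>
      let dk := fun i => d i - (ek i)%:Z in
      M3H_rev lt rfs' d ++
      [seq 'X_[beta] * fk | beta <- mons lt dk
                          & ~~ decide (LMset lt (M3H_rev lt rfs' dk) beta)]
  end.

Definition M3H_rows (K : fieldType) (r : nat) (n : 'I_r -> nat)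
  (lt : rel 'X_{1..nvars n})
  (fs : seq ({mpoly K[nvars n]} * ('I_r -> nat))) (d : 'I_r -> int) :=
  M3H_rev lt (rev fs) d.

Definition macaulay (N : nat) (K : fieldType) (rows : seq {mpoly K[N]})
  (cols : seq 'X_{1..N}) : 'M[K]_(size rows, size cols) :=
  \matrix_(i < size rows, j < size cols) (rows`_i)@_(nth 0%MM cols j).

Definition M3H (K : fieldType) (r : nat) (n : 'I_r -> nat)
  (lt : rel 'X_{1..nvars n})
  (fs : seq ({mpoly K[nvars n]} * ('I_r -> nat))) (d : 'I_r -> int) :=
  macaulay (M3H_rows lt fs d) (mons lt d).

Definition full_rank (K : fieldType) (a b : nat) (A : 'M[K]_(a, b)) : bool :=
  \rank A == minn a b.

(* [H_1(K(f_1..f_s; K[x]))]_d = 0, written out: every degree-d element of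
   the kernel of d_1 : (+)_j K[x](-deg f_j) -> K[x],  (g_j) |-> sum g_j f_j,
   is in the image of d_2 : (+)_{i<j} K[x](-deg f_i-deg f_j) e_i/\e_j,
   e_i/\e_j |-> f_i e_j - f_j e_i (with degree-d preimage). *)
Definition H1_vanishes (K : fieldType) (r : nat) (n : 'I_r -> nat)
  (fs : seq ({mpoly K[nvars n]} * ('I_r -> nat))) (d : 'I_r -> int) : Prop :=
  let s := size fs in
  let f := fun j : 'I_s => (nth (0, fun=> 0%N) fs j).1 in
  let e := fun j : 'I_s => (nth (0, fun=> 0%N) fs j).2 in
  forall g : 'I_s -> {mpoly K[nvars n]},
    (forall j, mhomog (fun i => d i - (e j i)%:Z) (g j)) ->
    \sum_(j < s) g j * f j = 0 ->
    exists h : 'I_s -> 'I_s -> {mpoly K[nvars n]},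
      (forall i j : 'I_s, (i < j)%N ->
         mhomog (fun l => d l - (e i l)%:Z - (e j l)%:Z) (h i j)) /\
      (forall j, g j = \sum_(i < s | (i < j)%N) h i j * f i
                     - \sum_(i < s | (j < i)%N) h j i * f i).

From mathcomp Require Import all_boot all_order all_algebra.
From mathcomp Require Import mpoly.
From Stdlib Require Import ClassicalEpsilon.
Set Implicit Arguments. Unset Strict Implicit. Unset Printing Implicit Defensive.
Import GRing.Theory Num.Theory.
Local Open Scope ring_scope.

(* Write I_s for the ideal generated by f_1, ..., f_s.  By induction on k, the
   rows of M^k_d span [I_k]_d: an element of [I_k]_d is p + q f_k with
   p in [I_(k-1)]_d, and reducing q modulo the row space of
   M^(k-1)_(d - deg f_k) leaves a remainder supported on the monomials outside
   the set L of the algorithm, so that q f_k is a combination of rows of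
   M^(k-1)_d and of the new rows x^beta f_k.  The rows are independent: a
   dependency gives g f_k in [I_(k-1)]_d with g supported on the new monomials
   x^beta.  Completing it to a syzygy of f_1, ..., f_k, the vanishing of
   [H_1^k]_d makes it a Koszul boundary, whence g lies in [I_(k-1)]_(d - deg f_k),
   hence in the row space of M^(k-1)_(d - deg f_k); a nonzero g would then have
   its leading monomial in L. *)

Lemma decideP (Q : Prop) : reflect Q (decide Q).
Proof. by rewrite /decide; case: excluded_middle_informative; constructor. Qed.

Lemma count_subpred_ltn (T : eqType) (a b : pred T) (s : seq T) x :
  subpred a b -> x \in s -> b x -> ~~ a x -> (count a s < count b s)%N.
Proof.
move=> sub_ab; elim: s => //= y s IH; rewrite in_cons.
case/predU1P=> [<- bx ax | xs bx ax].
  by rewrite bx (negbTE ax) add1n ltnS sub_count.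
have le_ab : (a y <= b y)%N by case ay: (a y); rewrite // sub_ab.
by rewrite -addnS leq_add ?IH.
Qed.

Section Span.
Variables (N : nat) (K : fieldType).
Local Notation P := {mpoly K[N]}.
Implicit Types (R : seq P) (p q : P) (c : nat -> K).

Definition lincomb R c : P := \sum_(i < size R) c i *: R`_i.

Definition row_independent R :=
  forall c, lincomb R c = 0 -> forall i, (i < size R)%N -> c i = 0.

Lemma in_spanE R p : in_span R p <-> exists c, p = lincomb R c.
Proof.
split=> [[c ->]|[c ->]]; last by exists (fun i => c i).
exists (fun i => if insub i is Some j then c j else 0).
by apply: eq_bigr => i _; rewrite valK.
Qed.

Lemma lincomb_cat R1 R2 c :
  lincomb (R1 ++ R2) c = lincomb R1 c + lincomb R2 (fun i => c (size R1 + i)%N).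
Proof.
rewrite /lincomb size_cat big_split_ord /=; congr (_ + _).
  by apply: eq_bigr => i _; rewrite nth_cat ltn_ord.
by apply: eq_bigr => i _; rewrite nth_cat ltnNge leq_addr /= addKn.
Qed.

Lemma lincomb_mulr R c f :
  lincomb [seq q * f | q <- R] c = lincomb R c * f.
Proof.
rewrite /lincomb size_map mulr_suml; apply: eq_bigr => i _.
by rewrite (nth_map 0) // scalerAl.
Qed.

Lemma mcoeff_lincomb R c m :
  (lincomb R c)@_m = \sum_(i < size R) c i * R`_i@_m.
Proof. by rewrite raddf_sum; apply: eq_bigr => i _ /=; rewrite mcoeffZ. Qed.

Lemma msupp_lincomb R c m :
  m \in msupp (lincomb R c) -> has (fun q => m \in msupp q) R.
Proof.
move/msupp_sum_le/flattenP => [_ /mapP[i _ ->] /msuppZ_le m_supp].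
by apply/hasP; exists R`_i; rewrite ?mem_nth.
Qed.

Lemma in_span0 R : in_span R 0.
Proof.
by apply/in_spanE; exists (fun=> 0); rewrite /lincomb big1 // => i _; rewrite scale0r.
Qed.

Lemma in_spanD R p q : in_span R p -> in_span R q -> in_span R (p + q).
Proof.
move=> /in_spanE[c ->] /in_spanE[c' ->]; apply/in_spanE; exists (fun i => c i + c' i).
by rewrite /lincomb -big_split; apply: eq_bigr => i _; rewrite scalerDl.
Qed.

Lemma in_spanZ R a p : in_span R p -> in_span R (a *: p).
Proof.
move=> /in_spanE[c ->]; apply/in_spanE; exists (fun i => a * c i).
by rewrite /lincomb scaler_sumr; apply: eq_bigr => i _; rewrite scalerA.
Qed.

Lemma in_span_mem R p : p \in R -> in_span R p.
Proof.
move=> pR; have lt_idx : (index p R < size R)%N by rewrite index_mem.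
apply/in_spanE; exists (fun i => (i == index p R)%:R).
rewrite /lincomb (bigD1 (Ordinal lt_idx)) //=.
rewrite eqxx scale1r nth_index // big1 ?addr0 // => i /eqP ne_i.
by rewrite (_ : _ == _ = false) ?scale0r //; apply/eqP => eq_i; apply: ne_i; exact: val_inj.
Qed.

Lemma in_span_cat R1 R2 p q :
  in_span R1 p -> in_span R2 q -> in_span (R1 ++ R2) (p + q).
Proof.
move=> /in_spanE[c ->] /in_spanE[c' ->]; apply/in_spanE.
exists (fun i => if (i < size R1)%N then c i else c' (i - size R1)%N).
rewrite lincomb_cat; congr (_ + _); apply: eq_bigr => i _.
  by rewrite ltn_ord.
by rewrite ltnNge leq_addr addKn.
Qed.

Lemma in_span_mulr R p f :
  in_span R p -> in_span [seq q * f | q <- R] (p * f).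
Proof.
by move=> /in_spanE[c ->]; apply/in_spanE; exists c; rewrite lincomb_mulr.
Qed.

Lemma in_span_monomials (B : seq 'X_{1..N}) p :
  {subset msupp p <= B} -> in_span [seq 'X_[b] | b <- B] p.
Proof.
move=> suppB; rewrite (mpolyE p) big_seq.
apply: (big_ind (in_span _)); [exact: in_span0 | exact: in_spanD |].
by move=> m /suppB mB; apply/in_spanZ/in_span_mem/map_f.
Qed.

Lemma msupp_lincomb_monomials (B : seq 'X_{1..N}) c :
  {subset msupp (lincomb [seq 'X_[b] | b <- B] c) <= B}.
Proof.
move=> m /msupp_lincomb/hasP[_ /mapP[b bB ->]].
by rewrite msuppX mem_seq1 => /eqP->.
Qed.

Lemma monomials_independent (B : seq 'X_{1..N}) :
  uniq B -> row_independent [seq 'X_[b] | b <- B].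
Proof.
move=> uB c c0 i; rewrite size_map => lt_iB.
have := congr1 (mcoeff (nth 0%MM B i)) c0.
rewrite mcoeff_lincomb mcoeff0 size_map (bigD1 (Ordinal lt_iB)) //= big1 ?addr0.
  by rewrite (nth_map 0%MM) // mcoeffX eqxx mulr1.
move=> j /eqP ne_ji; rewrite (nth_map 0%MM) // mcoeffX nth_uniq //.
by rewrite (_ : _ == _ = false) ?mulr0 //; apply/eqP => eq_ji; apply: ne_ji; exact: val_inj.
Qed.

Lemma macaulay_full_rank R (cols : seq 'X_{1..N}) :
  (forall q, q \in R -> {subset msupp q <= cols}) -> row_independent R ->
  full_rank (macaulay R cols).
Proof.
move=> supp_cols indepR; set A := macaulay R cols.
have freeA : row_free A.
  apply: inj_row_free => v vA0.
  pose c i := if insub i is Some i' then v 0 i' else 0.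
  have c0 : lincomb R c = 0.
    apply/mpolyP => m; rewrite mcoeff_lincomb mcoeff0.
    have [m_cols | m_cols] := boolP (m \in cols).
      have ltm : (index m cols < size cols)%N by rewrite index_mem.
      have := congr1 (fun M : 'rV_(size cols) => M 0 (Ordinal ltm)) vA0; rewrite !mxE => {2}<-.
      by apply: eq_bigr => i _; rewrite /c valK mxE nth_index.
    rewrite big1 // => i _; rewrite memN_msupp_eq0 ?mulr0 //.
    by apply: contra m_cols; apply/supp_cols/mem_nth.
  by apply/rowP => i; rewrite mxE -(indepR c c0 i) // /c valK.
have le_rows_cols : (size R <= size cols)%N by rewrite -(eqP freeA) rank_leq_col.
by rewrite /full_rank (eqP freeA) (minn_idPl le_rows_cols).
Qed.

End Span.

Section LeadingMonomials.
Variables (N : nat) (K : fieldType) (lt : rel 'X_{1..N}).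
Hypotheses (ltxx : irreflexive lt) (lt_trans : transitive lt)
  (lt_total : forall a b, a != b -> lt a b || lt b a).
Local Notation P := {mpoly K[N]}.
Implicit Types (R : seq P) (p q w : P).

Lemma exists_max_monomial (s : seq 'X_{1..N}) : s != [::] ->
  exists2 m, m \in s & forall m', m' \in s -> m' != m -> lt m' m.
Proof.
elim: s => // a [|b s] IH _.
  by exists a; rewrite ?mem_seq1 // => m'; rewrite mem_seq1 => ->.
have [x xs x_max] := IH isT.
have [->|ne_ax] := eqVneq a x.
  exists x; first exact: mem_head.
  by move=> m'; rewrite in_cons => /predU1P[->|/x_max//]; rewrite eqxx.
have [lt_ax|lt_xa] := orP (lt_total ne_ax).
  exists x; first by rewrite in_cons xs orbT.
  by move=> m'; rewrite in_cons => /predU1P[-> _|/x_max//].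
exists a; first exact: mem_head.
move=> m'; rewrite in_cons => /predU1P[->|m's _]; first by rewrite eqxx.
have [->|ne_m'x] := eqVneq m' x; first exact: lt_xa.
exact: lt_trans (x_max m' m's ne_m'x) lt_xa.
Qed.

Lemma exists_lm p : p != 0 -> exists m, is_lm lt p m.
Proof. by rewrite -msupp_eq0 => /exists_max_monomial[m]; exists m. Qed.

Definition reduced_by R p := forall m, m \in msupp p -> ~ LMset lt R m.

Lemma reduced_in_span_eq0 R p : in_span R p -> reduced_by R p -> p = 0.
Proof.
move=> span_p red_p; have [->//|p0] := eqVneq p 0.
have [m lm_m] := exists_lm p0.
by case: (red_p m lm_m.1); exists p.
Qed.

Lemma LMset_mem R m : LMset lt R m -> m \in flatten [seq msupp q | q <- R].
Proof.
case=> p [/in_spanE[c ->] _ [/msupp_lincomb/hasP[q qR m_q] _]].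
by apply/flattenP; exists (msupp q); rewrite ?map_f.
Qed.

Lemma cancel_LMset R w beta : LMset lt R beta ->
  exists2 v, in_span R v &
    forall m, m \in msupp (w - v) -> (m \in msupp w) && (m != beta) || lt m beta.
Proof.
case=> p [span_p _ [beta_p p_lt]].
have p_beta : p@_beta != 0 by rewrite -mcoeff_msupp.
exists ((w@_beta / p@_beta) *: p); first exact: in_spanZ.
move=> m m_supp; have [eq_mb|ne_mb] := eqVneq m beta.
  by move: m_supp; rewrite eq_mb mcoeff_msupp mcoeffB mcoeffZ mulfVK ?subrr ?eqxx.
move/msuppB_le: m_supp; rewrite mem_cat => /orP[m_w|/msuppZ_le m_p].
  by rewrite m_w.
by rewrite (p_lt m m_p ne_mb) orbT.
Qed.

Section Reduction.
Variable R : seq P.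

Let LM m := decide (LMset lt R m).
Let le x m := (x == m) || lt x m.
(* Termination measure of the reduction: cancelling the largest leading
   monomial occurring in w only introduces smaller monomials. *)
Let height w :=
  count (fun x => has (fun m => LM m && le x m) (msupp w)) (flatten [seq msupp q | q <- R]).

Let height_decreasing w w' beta :
  beta \in msupp w -> LMset lt R beta ->
  (forall m, m \in msupp w' -> LMset lt R m -> lt m beta) ->
  (height w' < height w)%N.
Proof.
move=> beta_w LM_beta below.
have le_lt_trans x m : le x m -> lt m beta -> lt x beta.
  by case/predU1P=> [->//|/lt_trans]; apply.
apply: (count_subpred_ltn (x := beta)); last first.
- apply/hasPn=> m m_w'; apply/negP=> /andP[/decideP LM_m le_bm].
  by have := le_lt_trans _ _ le_bm (below m m_w' LM_m); rewrite ltxx.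
- by apply/hasP; exists beta; rewrite // /le eqxx andbT; apply/decideP.
- exact: LMset_mem.
move=> x /hasP[m m_w' /andP[/decideP LM_m le_xm]]; apply/hasP; exists beta => //.
by rewrite /le (le_lt_trans x m) ?orbT ?andbT; [apply/decideP | | apply: below].
Qed.

Lemma exists_reduced_remainder q : exists2 v, in_span R v & reduced_by R (q - v).
Proof.
have [h] := ubnP (height q); elim: h q => // h IH w lt_w_h.
have [has_LM|no_LM] := boolP (has LM (msupp w)); last first.
  exists 0; first exact: in_span0.
  move=> m; rewrite subr0 => m_w LM_m; move/hasPn: no_LM => /(_ m m_w)/negP.
  by apply; apply/decideP.
have [beta] : exists2 beta, beta \in filter LM (msupp w) &
    forall m, m \in filter LM (msupp w) -> m != beta -> lt m beta.
  by apply: exists_max_monomial; rewrite -size_eq0 size_filter -lt0n -has_count.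
rewrite mem_filter => /andP[/decideP LM_beta beta_w] beta_max.
have [v span_v v_cancels] := cancel_LMset w LM_beta.
have below m : m \in msupp (w - v) -> LMset lt R m -> lt m beta.
  move=> /v_cancels/orP[/andP[m_w ne_mb] LM_m|//].
  by apply: beta_max ne_mb; rewrite mem_filter m_w andbT; apply/decideP.
have lt_height := height_decreasing beta_w LM_beta below.
have [v' span_v' red_v'] := IH (w - v) (leq_trans lt_height lt_w_h).
by exists (v + v'); [exact: in_spanD | rewrite opprD addrA].
Qed.

End Reduction.
End LeadingMonomials.

Section Multihomogeneous.
Variables (K : fieldType) (r : nat) (n : 'I_r -> nat).
Local Notation N := (nvars n).
Local Notation P := {mpoly K[N]}.
Implicit Types (e : 'I_r -> int) (p q : P).

Lemma mmdegD (m1 m2 : 'X_{1..N}) i : mmdeg (m1 + m2)%MM i = mmdeg m1 i + mmdeg m2 i.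
Proof.
rewrite /mmdeg -PoszD; congr Posz.
by rewrite -big_split; apply: eq_bigr => j _; rewrite mnmDE.
Qed.

Lemma mdeg_mmdeg (m : 'X_{1..N}) : (mdeg m)%:Z = \sum_(i < r) mmdeg m i.
Proof.
rewrite mdegE (partition_big (@block r n) xpredT) //=.
by rewrite (big_morph Posz PoszD (erefl 0%:Z)).
Qed.

Lemma mem_mons (lt : rel 'X_{1..N}) e m :
  (m \in mons lt e) = [forall i, mmdeg m i == e i].
Proof.
apply/idP/idP => [|/forallP m_deg].
  by rewrite mem_sort => /mapP[bm]; rewrite mem_enum inE => + ->.
have lt_deg : (mdeg m < (\sum_(i < r) `|e i|).+1)%N.
  rewrite ltnS -lez_nat mdeg_mmdeg (big_morph Posz PoszD (erefl 0%:Z)).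
  by apply: ler_sum => i _; rewrite (eqP (m_deg i)) abszE ler_norm.
rewrite mem_sort; apply/mapP; exists (BMultinom lt_deg) => //.
by rewrite mem_enum inE; apply/forallP.
Qed.

Lemma mons_uniq (lt : rel 'X_{1..N}) e : uniq (mons lt e).
Proof. by rewrite sort_uniq map_inj_uniq ?enum_uniq //; exact: val_inj. Qed.

Lemma mhomog_mons (lt : rel 'X_{1..N}) e p :
  mhomog e p <-> {subset msupp p <= mons lt e}.
Proof.
split=> [p_hom m /p_hom m_deg | supp_mons m /supp_mons].
  by rewrite mem_mons; apply/forallP => i; rewrite m_deg.
by rewrite mem_mons => /forallP m_deg i; apply/eqP.
Qed.

Lemma mhomog_eq e e' p : e =1 e' -> mhomog e p -> mhomog e' p.
Proof. by move=> eq_e p_hom m /p_hom m_deg i; rewrite -eq_e. Qed.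

Lemma mhomog0 e : mhomog e (0 : P).
Proof. by move=> m; rewrite msupp0. Qed.

Lemma mhomogD e p q : mhomog e p -> mhomog e q -> mhomog e (p + q).
Proof. by move=> p_hom q_hom m /msuppD_le; rewrite mem_cat => /orP[/p_hom|/q_hom]. Qed.

Lemma mhomogZ e a p : mhomog e p -> mhomog e (a *: p).
Proof. by move=> p_hom m /msuppZ_le /p_hom. Qed.

Lemma mhomogN e p : mhomog e p -> mhomog e (- p).
Proof. by rewrite -scaleN1r; apply: mhomogZ. Qed.

Lemma mhomogB e p q : mhomog e p -> mhomog e q -> mhomog e (p - q).
Proof. by move=> p_hom /mhomogN; apply: mhomogD. Qed.

Lemma mhomogM e e' p q : mhomog e p -> mhomog e' q ->
  mhomog (fun i => e i + e' i) (p * q).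
Proof.
move=> p_hom q_hom m /msuppM_le /allpairsP[[m1 m2] /= [m1_p m2_q ->]] i.
by rewrite mmdegD p_hom ?q_hom.
Qed.

End Multihomogeneous.

Section MacaulayRows.
Variables (K : fieldType) (r : nat) (n : 'I_r -> nat) (lt : rel 'X_{1..nvars n}).
Hypotheses (ltxx : irreflexive lt) (lt_trans : transitive lt)
  (lt_total : forall a b, a != b -> lt a b || lt b a).
Local Notation N := (nvars n).
Local Notation P := {mpoly K[N]}.
Local Notation gens := (seq (P * ('I_r -> nat))).
Implicit Types (fs : gens) (d e : 'I_r -> int) (p q : P).

Definition mdeg_sub d (e0 : 'I_r -> nat) : 'I_r -> int := fun i => d i - (e0 i)%:Z.

Definition gen fs j : P := (nth (0, fun=> 0%N) fs j).1.
Definition gdeg fs j : 'I_r -> nat := (nth (0, fun=> 0%N) fs j).2.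

Definition gens_mhomog fs :=
  forall j, (j < size fs)%N -> mhomog (fun i => (gdeg fs j i)%:Z) (gen fs j).

Definition in_ideal_deg fs e p := exists g : nat -> P,
  (forall j, (j < size fs)%N -> mhomog (mdeg_sub e (gdeg fs j)) (g j)) /\
  p = \sum_(j < size fs) g j * gen fs j.

Definition fresh_monomials fs e : seq 'X_{1..N} :=
  [seq b <- mons lt e | ~~ decide (LMset lt (M3H_rows lt fs e) b)].

Lemma M3H_rows_rcons fs f (e0 : 'I_r -> nat) d :
  M3H_rows lt (rcons fs (f, e0)) d =
  M3H_rows lt fs d ++ [seq 'X_[b] * f | b <- fresh_monomials fs (mdeg_sub d e0)].
Proof. by rewrite /M3H_rows rev_rcons. Qed.

Lemma gens_mhomog_rcons fs f (e0 : 'I_r -> nat) : gens_mhomog (rcons fs (f, e0)) ->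
  gens_mhomog fs /\ mhomog (fun i => (e0 i)%:Z) f.
Proof.
move=> hom; split=> [j lt_j|].
  by have := hom j; rewrite /gen /gdeg size_rcons nth_rcons lt_j ltnS; apply; apply: ltnW.
by have := hom (size fs); rewrite /gen /gdeg size_rcons nth_rcons ltnn eqxx; apply.
Qed.

Lemma fresh_monomialsP fs e p :
  {subset msupp p <= fresh_monomials fs e} <->
  mhomog e p /\ reduced_by lt (M3H_rows lt fs e) p.
Proof.
split=> [supp_fresh | [/(mhomog_mons lt) supp_mons red_p] m m_p].
  split=> [|m /supp_fresh]; last by rewrite mem_filter => /andP[/decideP].
  by apply/(mhomog_mons lt) => m /supp_fresh; rewrite mem_filter => /andP[].
by rewrite mem_filter supp_mons // andbT; apply/decideP/red_p.
Qed.

Lemma in_ideal_deg_mhomog fs e p :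
  gens_mhomog fs -> in_ideal_deg fs e p -> mhomog e p.
Proof.
move=> fs_hom [g [g_hom ->]]; apply: (big_ind (mhomog e)) => [||j _].
- exact: mhomog0.
- exact: mhomogD.
apply: mhomog_eq (mhomogM (g_hom j (ltn_ord j)) (fs_hom j (ltn_ord j))).
by move=> i; rewrite /mdeg_sub subrK.
Qed.

Lemma in_ideal_deg0 fs e : in_ideal_deg fs e 0.
Proof.
exists (fun=> 0); split=> [j _|]; first exact: mhomog0.
by rewrite big1 // => j _; rewrite mul0r.
Qed.

Lemma in_ideal_degD fs e p q :
  in_ideal_deg fs e p -> in_ideal_deg fs e q -> in_ideal_deg fs e (p + q).
Proof.
move=> [g [g_hom ->]] [h [h_hom ->]]; exists (fun j => g j + h j); split.
  by move=> j lt_j; apply: mhomogD; [apply: g_hom | apply: h_hom].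
by rewrite -big_split; apply: eq_bigr => j _; rewrite mulrDl.
Qed.

Lemma in_ideal_degZ fs e a p : in_ideal_deg fs e p -> in_ideal_deg fs e (a *: p).
Proof.
move=> [g [g_hom ->]]; exists (fun j => a *: g j); split.
  by move=> j lt_j; apply/mhomogZ/g_hom.
by rewrite scaler_sumr; apply: eq_bigr => j _; rewrite scalerAl.
Qed.

Lemma in_ideal_deg_span fs e (R : seq P) p :
  (forall q, q \in R -> in_ideal_deg fs e q) -> in_span R p -> in_ideal_deg fs e p.
Proof.
move=> R_in /in_spanE[c ->]; apply: (big_ind (in_ideal_deg fs e)) => [||i _].
- exact: in_ideal_deg0.
- exact: in_ideal_degD.
by apply/in_ideal_degZ/R_in/mem_nth.
Qed.

Lemma in_ideal_deg_mulr fs e e' d p f :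
  in_ideal_deg fs e p -> mhomog e' f -> (forall i, d i = e i + e' i) ->
  in_ideal_deg fs d (p * f).
Proof.
move=> [g [g_hom ->]] f_hom de; exists (fun j => g j * f); split.
  move=> j lt_j; apply: mhomog_eq (mhomogM (g_hom j lt_j) f_hom).
  by move=> i; rewrite /mdeg_sub de addrAC.
by rewrite mulr_suml; apply: eq_bigr => j _; rewrite mulrAC.
Qed.

Lemma in_ideal_deg_rconsP fs f (e0 : 'I_r -> nat) d p :
  in_ideal_deg (rcons fs (f, e0)) d p <->
  exists2 p0, in_ideal_deg fs d p0 &
    exists2 q, mhomog (mdeg_sub d e0) q & p = p0 + q * f.
Proof.
rewrite /in_ideal_deg /gen /gdeg size_rcons; split.
  case=> g [g_hom ->]; rewrite big_ord_recr /= nth_rcons ltnn eqxx /=.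
  exists (\sum_(j < size fs) g j * (nth (0, fun=> 0%N) fs j).1).
    exists g; split=> // j lt_j.
    by have := g_hom j (ltnW lt_j); rewrite nth_rcons lt_j.
  exists (g (size fs)).
    by have := g_hom (size fs) (ltnSn _); rewrite nth_rcons ltnn eqxx.
  by congr (_ + _); apply: eq_bigr => j _; rewrite nth_rcons ltn_ord.
case=> _ [g [g_hom ->]] [q q_hom ->].
exists (fun j => if (j < size fs)%N then g j else q); split.
  by move=> j; rewrite ltnS nth_rcons; case: ltngtP => // lt_j _; apply: g_hom.
rewrite big_ord_recr /= ltnn nth_rcons ltnn eqxx; congr (_ + _).
by apply: eq_bigr => j _; rewrite ltn_ord nth_rcons ltn_ord.
Qed.

Lemma rows_in_ideal_deg fs d p : p \in M3H_rows lt fs d -> in_ideal_deg fs d p.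
Proof.
elim/last_ind: fs d p => [|fs [f e0] IH] d p; first by rewrite /M3H_rows.
rewrite M3H_rows_rcons mem_cat => /orP[/IH p_in | /mapP[b b_fresh ->]].
  apply/in_ideal_deg_rconsP; exists p; last exists 0; rewrite ?mul0r ?addr0 //.
  exact: mhomog0.
apply/in_ideal_deg_rconsP; exists 0; first exact: in_ideal_deg0.
exists 'X_[b]; last by rewrite add0r.
apply: (proj1 ((fresh_monomialsP fs _ _).1 _)) => m.
by rewrite msuppX mem_seq1 => /eqP->.
Qed.

Lemma in_ideal_deg_in_span fs d p : gens_mhomog fs ->
  in_ideal_deg fs d p -> in_span (M3H_rows lt fs d) p.
Proof.
elim/last_ind: fs d p => [|fs [f e0] IH] d p fs_hom.
  by case=> g [_ ->]; rewrite big_ord0; exact: in_span0.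
have [fs_hom' f_hom] := gens_mhomog_rcons fs_hom.
case/in_ideal_deg_rconsP => p0 p0_in [q q_hom ->].
set R := M3H_rows lt fs (mdeg_sub d e0).
have [v span_v red_qv] := exists_reduced_remainder ltxx lt_trans lt_total R q.
have v_in : in_ideal_deg fs (mdeg_sub d e0) v.
  by apply: in_ideal_deg_span span_v => x; apply: rows_in_ideal_deg.
have -> : p0 + q * f = (p0 + v * f) + (q - v) * f.
  by rewrite addrAC -addrA -mulrDl subrK.
rewrite M3H_rows_rcons; apply: in_span_cat.
  apply: in_spanD; apply: IH => //.
  by apply: in_ideal_deg_mulr v_in f_hom _ => i; rewrite /mdeg_sub subrK.
rewrite (map_comp (fun q => q * f) (fun b => 'X_[b])).
apply/in_span_mulr/in_span_monomials/fresh_monomialsP; split=> //.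
by apply: mhomogB q_hom _; apply: in_ideal_deg_mhomog v_in.
Qed.

Lemma H1_vanishes_colon fs f (e0 : 'I_r -> nat) d g :
  H1_vanishes (rcons fs (f, e0)) d -> mhomog (mdeg_sub d e0) g ->
  in_ideal_deg fs d (g * f) -> in_ideal_deg fs (mdeg_sub d e0) g.
Proof.
move=> H1 g_hom [G [G_hom GfE]].
set fs' := rcons fs (f, e0).
have lt_last : (size fs < size fs')%N by rewrite size_rcons.
have le_fs : (size fs <= size fs')%N by apply: ltnW.
have le_ord (i : 'I_(size fs')) : (i <= size fs)%N.
  by rewrite -ltnS -(size_rcons fs (f, e0)) ltn_ord.
pose syz j := if (j < size fs)%N then G j else - g.
have syz_hom (j : 'I_(size fs')) : mhomog (mdeg_sub d (gdeg fs' j)) (syz j).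
  rewrite /syz /gdeg nth_rcons; case: ifP => [lt_j|ge_j]; first exact: G_hom.
  have /eqP-> : nat_of_ord j == size fs by rewrite eqn_leq le_ord leqNgt ge_j.
  by rewrite eqxx; apply: mhomogN.
have syz_eq : \sum_(j < size fs') syz j * gen fs' j = 0.
  rewrite size_rcons big_ord_recr /= /syz ltnn /gen nth_rcons ltnn eqxx mulNr GfE.
  by apply/eqP; rewrite subr_eq0; apply/eqP/eq_bigr => j _; rewrite ltn_ord nth_rcons ltn_ord.
have [h [h_hom syzE]] := H1 (fun j => syz j) syz_hom syz_eq.
pose hl i := if insub i is Some i' then h i' (Ordinal lt_last) else 0.
exists (fun i => - hl i); split.
  move=> i lt_i; apply/mhomogN; rewrite /hl.
  case: insubP => [i' _ val_i'|]; last by rewrite (ltn_trans lt_i).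
  apply: mhomog_eq (h_hom i' _ _) => [l|]; last by rewrite val_i'.
  by rewrite /mdeg_sub /gdeg val_i' !nth_rcons lt_i ltnn eqxx /= addrAC.
have := syzE (Ordinal lt_last); rewrite /syz /= ltnn [X in _ - X]big1 ?subr0.
  move/(congr1 -%R); rewrite opprK -sumrN => ->.
  rewrite (big_ord_widen _ (fun i => - hl i * gen fs i) le_fs).
  by apply: eq_bigr => i lt_i; rewrite /hl valK mulNr /gen nth_rcons lt_i.
by move=> i lt_i; have := le_ord i; rewrite leqNgt lt_i.
Qed.

Lemma M3H_rows_independent fs d : gens_mhomog fs ->
  (forall s, (s <= size fs)%N -> H1_vanishes (take s fs) d) ->
  row_independent (M3H_rows lt fs d).
Proof.
elim/last_ind: fs => [|fs [f e0] IH] fs_hom H1; first by move=> c _ i; rewrite /M3H_rows.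
have [fs_hom' _] := gens_mhomog_rcons fs_hom.
have H1_fs s : (s <= size fs)%N -> H1_vanishes (take s fs) d.
  move=> le_s; rewrite -(takel_cat [:: (f, e0)] le_s) cats1.
  by apply: H1; rewrite size_rcons; apply: leqW.
have H1_last : H1_vanishes (rcons fs (f, e0)) d.
  by rewrite -[rcons _ _]take_size; apply: H1.
set R := M3H_rows lt fs d; set B := fresh_monomials fs (mdeg_sub d e0).
move=> c; rewrite M3H_rows_rcons lincomb_cat.
rewrite (map_comp (fun q => q * f) (fun b => 'X_[b])) lincomb_mulr.
set g := lincomb [seq 'X_[b] | b <- B] _ => c0.
have gf_in : in_ideal_deg fs d (g * f).
  move/eqP: c0; rewrite addrC addr_eq0 => /eqP->; rewrite -scaleN1r.
  apply/in_ideal_degZ/(in_ideal_deg_span (R := R)); first exact: rows_in_ideal_deg.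
  by apply/in_spanE; exists c.
have [g_hom g_red] :
    mhomog (mdeg_sub d e0) g /\ reduced_by lt (M3H_rows lt fs (mdeg_sub d e0)) g.
  by apply/(fresh_monomialsP fs) => m /msupp_lincomb_monomials.
have g0 : g = 0.
  apply: reduced_in_span_eq0 g_red => //; apply: in_ideal_deg_in_span fs_hom' _.
  exact: H1_vanishes_colon H1_last g_hom gf_in.
move=> i; rewrite size_cat size_map => lt_i.
have [lt_iR|ge_iR] := ltnP i (size R).
  by apply: IH => //; move: c0; rewrite g0 mul0r addr0.
rewrite -(subnKC ge_iR); apply: (monomials_independent _ g0).
  exact/filter_uniq/mons_uniq.
by rewrite -(ltn_add2l (size R)) subnKC.
Qed.

End MacaulayRows.

Theorem mainTheorem20 (K : fieldType) (Kchar0 : [pchar K] =i pred0)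
  (r : nat) (n : 'I_r -> nat) (lt : rel 'X_{1..nvars n})
  (lt_monomial : monomial_order lt)
  (k : nat) (f : 'I_k -> {mpoly K[nvars n]}) (degf : 'I_k -> 'I_r -> nat)
  (f_mhomog : forall j, mhomog (fun i => (degf j i)%:Z) (f j))
  (d : 'I_r -> int) :
  let fs := [seq (f j, degf j) | j <- enum 'I_k] in
  (forall s, (s <= k)%N -> H1_vanishes (take s fs) d) ->
  full_rank (M3H lt fs d).
Proof.
move=> fs H1.
have [ltxx lt_trans lt_total _ _] := lt_monomial.
have size_fs : size fs = k by rewrite size_map size_enum_ord.
have fs_hom : gens_mhomog fs.
  move=> j; rewrite size_fs => lt_jk.
  by rewrite /gen /gdeg (nth_map (Ordinal lt_jk)) ?size_enum_ord //; apply: f_mhomog.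
apply: macaulay_full_rank => [p /rows_in_ideal_deg p_in|].
  by apply/(mhomog_mons lt)/(in_ideal_deg_mhomog fs_hom).
apply: (M3H_rows_independent ltxx lt_trans lt_total fs_hom) => s.
by rewrite size_fs; apply: H1.
Qed.
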